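(* Let $B$ be a finite brace such that every Sylow subgroup of the additive group $(B,+)$ and every Sylow subgroup of the multiplicative group $(B,\cdot)$ is cyclic. Then $B$ is supersoluble.
   Context: A brace (skew left brace) is a set $B$ with two binary operations $+$ and $\cdot$ (the product written by juxtaposition) such that $(B,+)$ and $(B,\cdot)$ are groups and $a(b+c)=ab-a+ac$ for all $a,b,c\in B$; the two groups have the same identity $0$. For $a,b\in B$ put $\lambda_a(b)=-a+ab$; then $\lambda\colon (B,\cdot)\to\operatorname{Aut}(B,+)$, $a\mapsto\lambda_a$, is a group homomorphism. A subbrace is a subset that is a subgroup of both $(B,+)$ and $(B,\cdot)$. An ideal of $B$ is a subbrace $I$ that is normal in $(B,+)$ and in $(B,\cdot)$ and satisfies $\lambda_b(I)\subseteq I$ for all $b\in B$; then $B/I$ is naturally a brace. $\operatorname{Soc}(B)=\operatorname{Ker}\lambda\cap Z(B,+)$, an ideal. A brace $B$ is supersoluble if there is a finite chain of ideals $\{0\}=I_0\le I_1\le\dots\le I_n=B$ of $B$ such that for each $0\le i<n$, either $(I_{i+1}/I_i,+)$ is infinite cyclic and $I_{i+1}/I_i\le\operatorname{Soc}(B/I_i)$, or $I_{i+1}/I_i$ has prime order. *)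

From HB Require Import structures.
From mathcomp Require Import all_boot all_order all_algebra all_fingroup all_solvable.
Set Implicit Arguments. Unset Strict Implicit. Unset Printing Implicit Defensive.

(* A (skew left) brace on a finite carrier T.  The additive group has
   operations badd / bneg / bzero, the multiplicative group has
   operations bmul / binv with the SAME identity bzero. *)
Record brace (T : finType) := Brace {
  badd : T -> T -> T;
  bneg : T -> T;
  bzero : T;
  bmul : T -> T -> T;
  binv : T -> T;
  baddA : associative badd;
  badd0 : left_id bzero badd;
  baddN : left_inverse bzero bneg badd;
  bmulA : associative bmul;
  bmul1 : left_id bzero bmul;
  bmulV : left_inverse bzero binv bmul;
  bmulDr : forall a b c,
    bmul a (badd b c) = badd (badd (bmul a b) (bneg a)) (bmul a c)
}.

Definition brace_add (T : finType) (B : brace T) : Type := T.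
Definition brace_mul (T : finType) (B : brace T) : Type := T.
Arguments brace_add {T} B.
Arguments brace_mul {T} B.

Section BraceGroups.
Variables (T : finType) (B : brace T).

HB.instance Definition _ := Finite.on (brace_add B).
HB.instance Definition _ := Finite_isGroup.Build (brace_add B)
  (@baddA _ B) (@badd0 _ B) (@baddN _ B).

HB.instance Definition _ := Finite.on (brace_mul B).
HB.instance Definition _ := Finite_isGroup.Build (brace_mul B)
  (@bmulA _ B) (@bmul1 _ B) (@bmulV _ B).

Local Notation "x + y" := (badd B x y).
Local Notation "- x" := (bneg B x).
Local Notation "0" := (bzero B).
Local Notation "x * y" := (bmul B x y).

Definition blambda (a b : T) : T := - a + a * b.

Definition bzmul (g : T) (z : int) : T :=
  match z with
  | Posz n => iter n (badd B g) 0
  | Negz n => - iter n.+1 (badd B g) 0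
  end.

Definition is_subbrace (I : {set T}) : Prop :=
  [/\ 0 \in I,
      (forall x y, x \in I -> y \in I -> x + y \in I),
      (forall x, x \in I -> - x \in I),
      (forall x y, x \in I -> y \in I -> x * y \in I) &
      (forall x, x \in I -> binv B x \in I)].

Definition is_ideal (I : {set T}) : Prop :=
  [/\ is_subbrace I,
      (forall b x, x \in I -> b + x + - b \in I),
      (forall b x, x \in I -> b * x * binv B b \in I) &
      (forall b x, x \in I -> blambda b x \in I)].

(* Congruence modulo an ideal I in B/I : x + I = y + I *)
Definition bcong (I : {set T}) (x y : T) : Prop := - x + y \in I.

(* J/I (I <= J ideals) has infinite cyclic additive group *)
Definition factor_inf_cyclic (I J : {set T}) : Prop :=
  exists2 g, g \in J &
    (forall x, x \in J -> exists z : int, bcong I (bzmul g z) x) /\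
    (forall z1 z2 : int, bcong I (bzmul g z1) (bzmul g z2) -> z1 = z2).

(* J/I <= Soc(B/I) = Ker lambda /\ Z(B/I,+) *)
Definition factor_in_soc (I J : {set T}) : Prop :=
  forall x, x \in J -> forall y : T,
    bcong I (blambda x y) y /\ bcong I (y + x) (x + y).

Definition factor_prime (I J : {set T}) : Prop :=
  prime (#|J| %/ #|I|).

Definition supersoluble : Prop :=
  exists (n : nat) (I : nat -> {set T}),
    [/\ I 0%N = [set 0], I n = [set: T],
        (forall i, (i <= n)%N -> is_ideal (I i)),
        (forall i, (i < n)%N -> I i \subset I i.+1) &
        (forall i, (i < n)%N ->
           (factor_inf_cyclic (I i) (I i.+1) /\ factor_in_soc (I i) (I i.+1))
           \/ factor_prime (I i) (I i.+1))].

End BraceGroups.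

From HB Require Import structures.
From mathcomp Require Import all_boot all_order all_algebra all_fingroup all_solvable.
From mathcomp Require Import zify.

(* Let p be the smallest prime dividing the order of a nontrivial ideal J.  As the
   Sylow p-subgroups of (J,+) and (J,.) are cyclic, Burnside's transfer argument
   gives both groups a normal p-complement, so each of them has exactly one
   subgroup of index p.  The one of (J,+) is therefore normal in (B,+) and stable
   under every lambda_b; since ab = a + lambda_a(b) it is also a subgroup of index p
   of (J,.), hence the one of (J,.), hence an ideal of B.  Descending from B to 0
   in this way gives a chain of ideals whose factors have prime order. *)

Set Implicit Arguments.
Unset Strict Implicit.
Unset Printing Implicit Defensive.

Local Open Scope group_scope.

Section CyclicSylowTransfer.

Variables (gT : finGroupType) (G P : {group gT}) (p : nat).
Hypotheses (pr_p : prime p) (sylP : p.-Sylow(G) P) (cycP : cyclic P).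
Hypothesis p_min : forall q, prime q -> q %| #|G| -> p <= q.

Let sPG : P \subset G := pHall_sub sylP.
Let abP : abelian P := cyclic_abelian cycP.
Let p'iGP : p^'.-nat #|G : P| := let: And3 _ _ p'i := and3P sylP in p'i.

(* N_G(P)/C_G(P) embeds in Aut P, of order p^(e-1) (p-1); it is a p'-group all of
   whose prime divisors are at least p, hence trivial. *)
Lemma cyclic_Sylow_norm_sub_cent : 'N_G(P) \subset 'C(P).
Proof.
set N := 'N_G(P); set d := #|N : N :&: 'C(P)|.
have sPN : P \subset N by rewrite subsetI sPG normG.
have sPNC : P \subset N :&: 'C(P) by rewrite subsetI sPN.
have d_Aut : d %| #|Aut P|.
  have := cardSg (Aut_conj_aut P N).
  by rewrite card_morphim ker_conj_aut /= /d setIC -setIA setIid indexgI.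
have d_p' : p^'.-nat d.
  apply: pnat_dvd p'iGP; apply: dvdn_trans (indexSg sPN (subsetIl G _)).
  by rewrite -(Lagrange_index (subsetIl N _) sPNC) dvdn_mulr.
have d_dvd_p1 : d %| p.-1.
  move: d_Aut; rewrite card_Aut_cyclic // (card_Hall sylP) p_part.
  case: (logn p #|G|) => [|e]; first by rewrite dvdn1 => /eqP->.
  rewrite totient_pfactor // Gauss_dvdl // coprimeXr //.
  by rewrite coprime_sym prime_coprime // -p'natE.
have d_G : d %| #|G|.
  exact: dvdn_trans (dvdn_indexg _ _) (cardSg (subsetIl G _)).
have d1 : d = 1%N.
  have p1_gt0 : 0 < p.-1 by rewrite ltn_predRL prime_gt1.
  apply/eqP; rewrite eqn_leq indexg_gt0 andbT leqNgt; apply/negP => d_gt1.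
  have q_ge_p := p_min (pdiv_prime d_gt1) (dvdn_trans (pdiv_dvd d) d_G).
  have q_le_d := pdiv_leq (ltnW d_gt1).
  have := dvdn_leq p1_gt0 d_dvd_p1; lia.
by move/eqP: d1; rewrite indexg_eq1 subsetI => /andP[].
Qed.

Lemma cyclic_Sylow_conj_fixed a x : a \in P -> x \in G -> a ^ x \in P -> a ^ x = a.
Proof.
move=> Pa Gx Pax; set C := 'C_G[a ^ x].
have sCG : C \subset G := subsetIl _ _.
have cPP : P \subset 'C(P) := abP.
have sPC : P \subset C by rewrite subsetI sPG sub_cent1 (subsetP cPP).
have sPxC : P :^ x \subset C.
  by rewrite subsetI conj_subG ?sPG // cent1J conjSg sub_cent1 (subsetP cPP).
have sylPC : p.-Sylow(C) P := pHall_subl sPC sCG sylP.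
have sylPxC : p.-Sylow(C) (P :^ x)%G by rewrite (pHall_subl sPxC sCG) ?pHallJ.
(* Sylow conjugacy in C_G(a^x) yields x * c normalising, hence centralising, P. *)
have [c Cc defP] := Sylow_trans sylPxC sylPC.
have Gc : c \in G := subsetP sCG c Cc.
have NPxc : x * c \in 'N_G(P) by rewrite inE groupM //=; apply/normP; rewrite conjsgM -defP.
have CPxc : x * c \in 'C(P) := subsetP cyclic_Sylow_norm_sub_cent _ NPxc.
have fix_a : a ^ (x * c) = a by apply/conjg_fixP/commgP/commute_sym/(centP CPxc).
have fix_ax : (a ^ x) ^ c = a ^ x.
  by case/setIP: Cc => _ /cent1P/commute_sym cxa; apply/conjg_fixP/commgP.
by rewrite -fix_ax -conjgM fix_a.
Qed.

Let abPP : abelian (idm P @* P). Proof. by rewrite morphim_idm. Qed.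

Local Notation transferP := (transfer_morphism G abPP).
Local Notation fmodP := (FiniteModule.fmod abPP).

Lemma transfer_cyclic_Sylow g : g \in P -> transferP g = fmodP (g ^+ #|G : P|).
Proof.
move=> Pg; have Gg : g \in G := subsetP sPG g Pg.
have PPP : P \subset idm P @* P by rewrite morphim_idm.
have trX := transversalP (rcosets_cycle_partition sPG Gg).
rewrite /= (transfer_cycle_expansion sPG abPP Gg trX).
rewrite -(sum_index_rcosets_cycle sPG Gg trX).
rewrite (big_morph (fun n => fmodP (g ^+ n)) (id1 := 0%R) (op1 := +%R)); last first.
- by rewrite expg0 FiniteModule.fmod1.
- by move=> m n /=; rewrite expgD FiniteModule.fmodM // (subsetP PPP) ?groupX.
apply: eq_bigr => x Xx /=; set n := #|<[g]> : P :* x|.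
have Gx : x \in G := subsetP (transversal_sub trX) x Xx.
have Pgnx : (g ^+ n) ^ x^-1 \in P.
  by have := mulg_exp_card_rcosets P g x; rewrite mem_rcoset conjgE invgK mulgA.
by rewrite cyclic_Sylow_conj_fixed ?groupX ?groupV.
Qed.

Lemma ker_transfer_cyclic_Sylow_TI : 'ker transferP :&: P = 1.
Proof.
apply/trivgP/subsetP => g /setIP[Kg Pg]; apply/set1P.
have PgiP : g ^+ #|G : P| \in idm P @* P by rewrite morphim_idm ?groupX.
have gi1 : g ^+ #|G : P| = 1.
  apply: (injmP (FiniteModule.injm_fmod abPP)) => //.
  by rewrite /= -transfer_cyclic_Sylow // (mker Kg) FiniteModule.fmod1.
have coPi : coprime #|P| #|G : P| := pnat_coprime (pHall_pgroup sylP) p'iGP.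
by rewrite -(expgK coPi Pg) /= gi1 expg1n.
Qed.

Lemma ker_transfer_cyclic_Sylow_sdprod : 'ker transferP ><| P = G.
Proof.
have /andP[sKG nKG] := ker_normal transferP.
have TI_KP := ker_transfer_cyclic_Sylow_TI.
rewrite sdprodE ?(subset_trans sPG) //; apply/eqP; rewrite eqEcard mulG_subG sKG sPG.
rewrite TI_cardMg // -(Lagrange sKG) leq_mul2l; apply/orP; right.
have ->: #|G : 'ker transferP| = #|transferP @* G| by rewrite card_morphim setIid.
by apply: leq_trans (max_card _) _; rewrite card_sub /= morphim_idm.
Qed.

Theorem cyclic_Sylow_normal_complement : exists K : {group gT}, K ><| P = G.
Proof. by exists ('ker transferP)%G; apply: ker_transfer_cyclic_Sylow_sdprod. Qed.

End CyclicSylowTransfer.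

Lemma normal_p'group_sub_pnat_index (gT : finGroupType) (G K M : {group gT}) p :
  K <| G -> p^'.-group K -> M \subset G -> p.-nat #|G : M| -> K \subset M.
Proof.
move=> /andP[sKG nKG] p'K sMG pGM.
have nKM : M \subset 'N(K) := subset_trans sMG nKG.
rewrite -indexg_eq1 -indexgI; apply/eqP; apply: (pnat_1 (pi := p)).
  rewrite indexgI -indexMg -norm_joinEl //.
  by apply: pnat_dvd pGM; rewrite indexSg ?joing_subl // join_subG sMG.
exact: pnat_dvd (dvdn_indexg _ _) p'K.
Qed.

Section SdprodCyclicSylow.

Variables (gT : finGroupType) (G K P : {group gT}) (p : nat).
Hypotheses (sylP : p.-Sylow(G) P) (cycP : cyclic P) (defG : K ><| P = G).

Let p'K : p^'.-group K.
Proof.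
have [_ _ p'GP] := and3P sylP.
by rewrite /pgroup -(mulnK #|K| (cardG_gt0 P)) (sdprod_card defG) divgS ?(pHall_sub sylP).
Qed.

Lemma sdprod_cyclic_Sylow_sub_uniq (M1 M2 : {group gT}) :
  M1 \subset G -> M2 \subset G -> p.-nat #|G : M1| -> #|M1| = #|M2| -> M1 :=: M2.
Proof.
have [nsKG _ defKP _ TI_KP] := sdprod_context defG.
have decomp (M : {group gT}) : M \subset G -> p.-nat #|G : M| ->
    M :=: K * (P :&: M) /\ #|M| = (#|K| * #|P :&: M|)%N.
  move=> sMG pGM; have sKM := normal_p'group_sub_pnat_index nsKG p'K sMG pGM.
  have defM : K * (P :&: M) = M by rewrite group_modl // defKP; apply/setIidPr.
  have TI_K_PM : K :&: (P :&: M) = 1.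
    by apply/trivgP; rewrite -TI_KP setIS ?subsetIl.
  by rewrite -[in #|M|]defM TI_cardMg.
move=> sM1G sM2G pGM1 cardM12.
have pGM2 : p.-nat #|G : M2| by rewrite -divgS // -cardM12 divgS.
have [defM1 cardM1] := decomp M1 sM1G pGM1.
have [defM2 cardM2] := decomp M2 sM2G pGM2.
have eqPM12 : P :&: M1 = P :&: M2.
  apply/eqP; rewrite (eq_subG_cyclic cycP) ?subsetIl //.
  by rewrite -(eqn_pmul2l (cardG_gt0 K)) -cardM1 -cardM2 cardM12.
by rewrite defM1 defM2 eqPM12.
Qed.

Lemma sdprod_cyclic_Sylow_exists_index_p :
  prime p -> p %| #|G| -> exists M : {group gT}, M \subset G /\ #|G : M| = p.
Proof.
move=> pr_p p_dvd_G; have [nsKG sPG _ nKP TI_KP] := sdprod_context defG.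
have [g defP] := cyclicP cycP.
have p_dvd_g : p %| #[g].
  have p'Kp : ~~ (p %| #|K|) by rewrite -p'natE.
  by move: p_dvd_G; rewrite -(sdprod_card defG) Euclid_dvdM // (negPf p'Kp) /order -defP.
have sQP : <[g ^+ p]> \subset P by rewrite defP cycle_subG mem_cycle.
have TI_KQ : K :&: <[g ^+ p]> = 1 by apply/trivgP; rewrite -TI_KP setIS.
exists (K <*> <[g ^+ p]>)%G; split.
  by rewrite join_subG (normal_sub nsKG) (subset_trans sQP sPG).
rewrite -divgS ?join_subG ?(normal_sub nsKG) ?(subset_trans sQP sPG) //=.
rewrite norm_joinEr ?(subset_trans sQP nKP) // TI_cardMg // -/(order _) orderXdiv //.
rewrite -(sdprod_card defG) defP -/(order g) divnMl ?cardG_gt0 //.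
rewrite -{1}(divnK p_dvd_g) mulKn // divn_gt0 ?prime_gt0 //.
exact: dvdn_leq (order_gt0 g) p_dvd_g.
Qed.

End SdprodCyclicSylow.

Section ZgroupIndexPdiv.

Variables (gT : finGroupType) (J : {group gT}).
Hypotheses (zJ : Zgroup J) (ntJ : 1 < #|J|).

Lemma Zgroup_pdiv_normal_complement :
  exists K P : {group gT}, [/\ (pdiv #|J|).-Sylow(J) P, cyclic P & K ><| P = J].
Proof.
have pr_p := pdiv_prime ntJ.
have [P sylP] := Sylow_exists (pdiv #|J|) J.
have cycP : cyclic P by apply: (forall_inP zJ); apply/SylowP; exists (pdiv #|J|).
have p_min q : prime q -> q %| #|J| -> pdiv #|J| <= q.
  by move=> pr_q; apply: pdiv_min_dvd (prime_gt1 pr_q).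
have [K defJ] := cyclic_Sylow_normal_complement pr_p sylP cycP p_min.
by exists K, P.
Qed.

Lemma Zgroup_exists_index_pdiv : exists M : {group gT}, M \subset J /\ #|J : M| = pdiv #|J|.
Proof.
have [K [P [sylP cycP defJ]]] := Zgroup_pdiv_normal_complement.
exact: sdprod_cyclic_Sylow_exists_index_p sylP cycP defJ (pdiv_prime ntJ) (pdiv_dvd _).
Qed.

Lemma Zgroup_index_pdiv_uniq (M1 M2 : {group gT}) :
  M1 \subset J -> M2 \subset J -> #|J : M1| = pdiv #|J| -> #|M1| = #|M2| -> M1 :=: M2.
Proof.
move=> sM1J sM2J iJM1; have [K [P [sylP cycP defJ]]] := Zgroup_pdiv_normal_complement.
apply: sdprod_cyclic_Sylow_sub_uniq sylP cycP defJ _ _ sM1J sM2J _.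
by rewrite iJM1 pnat_id ?pdiv_prime.
Qed.

End ZgroupIndexPdiv.

Lemma Zgroup_cyclic_Sylows (gT : finGroupType) (G : {group gT}) :
  (forall p (P : {group gT}), prime p -> P \in 'Syl_p(G) -> cyclic P) -> Zgroup G.
Proof.
by move=> cycSyl; apply/forall_inP => P /SylowP[p pr_p sylP]; apply: (cycSyl p); rewrite ?inE.
Qed.

Lemma conj_closed_normP (gT : finGroupType) (A : {set gT}) :
  reflect (forall b x, x \in A -> b * x * b^-1 \in A) ([set: gT] \subset 'N(A)).
Proof.
apply: (iffP idP) => [nA b x Ax | closedA].
  have /normP nAb := subsetP nA b^-1 (in_setT _).
  have ->: b * x * b^-1 = x ^ b^-1 by rewrite conjgE invgK mulgA.
  by rewrite -nAb memJ_conjg.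
apply/subsetP => y _; rewrite inE; apply/subsetP => z; rewrite mem_conjg => Azy.
by have := closedA y^-1 _ Azy; rewrite invgK -mulgA -conjgE conjgKV.
Qed.

Section BraceGroupSets.

Variables (T : finType) (B : brace T).
Local Notation GA := (brace_add B).
Local Notation GM := (brace_mul B).
Implicit Types (J : {set T}) (A : {set GA}).

(* brace_add B and brace_mul B carry finType structures that are not convertible
   with that of T, so subsets of T are transported explicitly. *)
Definition add_set (J : {set T}) : {set GA} := [set x : GA | (x : T) \in J].
Definition mul_set (J : {set T}) : {set GM} := [set x : GM | (x : T) \in J].
Definition set_of_add (A : {set GA}) : {set T} := [set x : T | (x : GA) \in A].

Lemma card_add_set J : #|add_set J| = #|J|.
Proof. by apply: on_card_preimset; apply: onW_bij; exists id. Qed.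

Lemma card_mul_set J : #|mul_set J| = #|J|.
Proof. by apply: on_card_preimset; apply: onW_bij; exists id. Qed.

Lemma card_set_of_add A : #|set_of_add A| = #|A|.
Proof. by apply: on_card_preimset; apply: onW_bij; exists id. Qed.

Lemma set_of_addK A : add_set (set_of_add A) = A.
Proof. by apply/setP => x; rewrite !inE. Qed.

Lemma add_set_group_set J : bzero B \in J ->
  (forall x y, x \in J -> y \in J -> badd B x y \in J) -> group_set (add_set J).
Proof. by move=> J0 Jadd; apply/group_setP; split=> [|x y]; rewrite !inE //; apply: Jadd. Qed.

Lemma mul_set_group_set J : bzero B \in J ->
  (forall x y, x \in J -> y \in J -> bmul B x y \in J) -> group_set (mul_set J).
Proof. by move=> J0 Jmul; apply/group_setP; split=> [|x y]; rewrite !inE //; apply: Jmul. Qed.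

Lemma add_set_normP J :
  reflect (forall b x, x \in J -> badd B (badd B b x) (bneg B b) \in J)
          ([set: GA] \subset 'N(add_set J)).
Proof.
apply: (iffP (conj_closed_normP _)) => closedJ b x; have := closedJ b x;
  by rewrite !inE.
Qed.

Lemma mul_set_normP J :
  reflect (forall b x, x \in J -> bmul B (bmul B b x) (binv B b) \in J)
          ([set: GM] \subset 'N(mul_set J)).
Proof.
apply: (iffP (conj_closed_normP _)) => closedJ b x; have := closedJ b x;
  by rewrite !inE.
Qed.

Lemma blambda_morphM b :
  {in [set: GA] &, {morph (blambda B b : GA -> GA) : x y / x * y}}.
Proof.
move=> x y _ _; rewrite /blambda.
change ((bneg B b : GA) * bmul B b (badd B x y)
        = ((bneg B b : GA) * bmul B b x) * ((bneg B b : GA) * bmul B b y)).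
rewrite bmulDr.
change ((bneg B b : GA) * ((bmul B b x : GA) * (bneg B b : GA) * bmul B b y)
        = ((bneg B b : GA) * bmul B b x) * ((bneg B b : GA) * bmul B b y)).
by rewrite !mulgA.
Qed.

Lemma blambda_inj b : injective (blambda B b).
Proof.
move=> x y /(mulgI (bneg B b : GA)) eq_bxy.
by apply: (mulgI (b : GM)).
Qed.

Lemma bmul_blambda x y : bmul B x y = badd B x (blambda B x y).
Proof. exact: (esym (mulKVg (x : GA) (bmul B x y))). Qed.

End BraceGroupSets.

Section ZgroupBrace.

Variables (T : finType) (B : brace T).
Local Notation GA := (brace_add B).
Local Notation GM := (brace_mul B).

Lemma lambda_stable_subbrace (A : {group GA}) :
  (forall b (x : GA), x \in A -> (blambda B b x : GA) \in A) ->
  is_subbrace B (set_of_add A).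
Proof.
move=> lamA; have memA x : (x \in set_of_add A) = ((x : GA) \in A) by rewrite inE.
have A0 : bzero B \in set_of_add A by rewrite memA group1.
have Amul x y : x \in set_of_add A -> y \in set_of_add A -> bmul B x y \in set_of_add A.
  by rewrite !memA bmul_blambda => Ax Ay; rewrite (groupM Ax) ?lamA.
split=> // [x y | x | x Ax].
- by rewrite !memA; apply: groupM.
- by rewrite !memA; apply: groupVr.
have AMx : (x : GM) \in Group (mul_set_group_set A0 Amul) by rewrite inE.
by have := groupVr AMx; rewrite inE.
Qed.

Hypotheses (zgA : Zgroup [set: GA]) (zgM : Zgroup [set: GM]).

Lemma ideal_sub_index_pdiv (J : {set T}) : is_ideal B J -> 1 < #|J| ->
  exists M : {set T}, [/\ is_ideal B M, M \subset J & #|J| = (pdiv #|J| * #|M|)%N].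
Proof.
case=> [[J0 Jadd _ Jmul _] JnA JnM Jlam] ntJ.
pose JA := Group (add_set_group_set J0 Jadd).
pose JM := Group (mul_set_group_set J0 Jmul).
have zJA : Zgroup JA := ZgroupS (subsetT _) zgA.
have zJM : Zgroup JM := ZgroupS (subsetT _) zgM.
have cardJA : #|JA| = #|J| := card_add_set B J.
have cardJM : #|JM| = #|J| := card_mul_set B J.
have ntJA : 1 < #|JA| by rewrite cardJA.
have ntJM : 1 < #|JM| by rewrite cardJM.
have nJA : [set: GA] \subset 'N(JA) by apply/add_set_normP.
have nJM : [set: GM] \subset 'N(JM) by apply/mul_set_normP.
have [MA [sMAJ iMA]] := Zgroup_exists_index_pdiv zJA ntJA.
have nMA : [set: GA] \subset 'N(MA).
  apply/normsP => y _; apply/esym/(Zgroup_index_pdiv_uniq zJA ntJA sMAJ _ iMA).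
    by rewrite -(normsP nJA y) ?inE // conjSg.
  by rewrite cardJg.
have lamMA b (x : GA) : x \in MA -> (blambda B b x : GA) \in MA.
  pose f := Morphism (blambda_morphM (B := B) b).
  have fMA : f @* MA = MA.
    apply/esym/(Zgroup_index_pdiv_uniq zJA ntJA sMAJ _ iMA).
      rewrite /= morphimEsub ?subsetT //; apply/subsetP => _ /imsetP[z MAz ->].
      by move: (subsetP sMAJ z MAz); rewrite !inE; apply: Jlam.
    rewrite /= morphimEsub ?subsetT // card_in_imset // => z1 z2 _ _.
    exact: (@blambda_inj _ B b).
  by move=> MAx; rewrite -fMA; exact: (mem_morphim f (in_setT x) MAx).
pose M := set_of_add MA.
have subM : is_subbrace B M := lambda_stable_subbrace lamMA.
have [M0 _ _ Mmul _] := subM.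
pose MM := Group (mul_set_group_set M0 Mmul).
have cardM : #|M| = #|MA| := card_set_of_add MA.
have sMMJ : MM \subset JM.
  by apply/subsetP => x; rewrite !inE => /(subsetP sMAJ); rewrite inE.
have iMM : #|JM : MM| = pdiv #|JM|.
  by rewrite -divgS // cardJM [#|MM|]card_mul_set cardM -cardJA divgS.
have nMM : [set: GM] \subset 'N(MM).
  apply/normsP => y _; apply/esym/(Zgroup_index_pdiv_uniq zJM ntJM sMMJ _ iMM).
    by rewrite -(normsP nJM y) ?inE // conjSg.
  by rewrite cardJg.
exists M; split=> //.
- split=> //; last by move=> b x; rewrite !inE; apply: lamMA.
  + by apply/add_set_normP; rewrite set_of_addK.
  + exact/mul_set_normP.
- by apply/subsetP => x; rewrite inE => /(subsetP sMAJ); rewrite inE.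
- by rewrite cardM -cardJA -iMA mulnC Lagrange.
Qed.

End ZgroupBrace.

Section PrimeIdealSeries.

Variables (T : finType) (B : brace T).

Definition prime_ideal_series (J : {set T}) (n : nat) (I : nat -> {set T}) : Prop :=
  [/\ I 0%N = [set bzero B], I n = J,
      (forall i, i <= n -> is_ideal B (I i)),
      (forall i, i < n -> I i \subset I i.+1) &
      (forall i, i < n -> factor_prime (I i) (I i.+1))].

Lemma prime_ideal_series_rcons J M n I :
    prime_ideal_series M n I -> is_ideal B J -> M \subset J -> factor_prime M J ->
  prime_ideal_series J n.+1 (fun i => if i <= n then I i else J).
Proof.
case=> I0 In idI sI prI idJ sMJ prMJ; split=> [|||i|i].
- by [].
- by rewrite ltnn.
- by move=> i _; case: ifP => // /idI.
- rewrite ltnS => le_in; rewrite le_in; case: ltngtP le_in => // [/sI //|-> _].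
  by rewrite In.
- rewrite ltnS => le_in; rewrite le_in; case: ltngtP le_in => // [/prI //|-> _].
  by rewrite In.
Qed.

Hypotheses (zgA : Zgroup [set: brace_add B]) (zgM : Zgroup [set: brace_mul B]).

Lemma ideal_prime_series J : is_ideal B J -> exists n I, prime_ideal_series J n I.
Proof.
have [m] := ubnP #|J|; elim: m J => // m IHm J /ltnSE le_J_m idJ.
have [[J0 _ _ _ _] _ _ _] := idJ.
have [le_J_1 | ntJ] := leqP #|J| 1.
  have J_0 : J = [set bzero B] by apply/esym/eqP; rewrite eqEcard sub1set J0 cards1.
  by exists 0%N, (fun _ => J); split.
have [M [idM sMJ cardJ]] := ideal_sub_index_pdiv zgA zgM idJ ntJ.
have pr_p := pdiv_prime ntJ.
have M_gt0 : 0 < #|M| by have [[M0 _ _ _ _] _ _ _] := idM; apply/card_gt0P; exists (bzero B).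
have lt_M_J : #|M| < #|J| by rewrite cardJ ltn_Pmull ?prime_gt1.
have [n [I serM]] := IHm M (leq_trans lt_M_J le_J_m) idM.
exists n.+1, (fun i => if i <= n then I i else J).
by apply: prime_ideal_series_rcons serM idJ sMJ _; rewrite /factor_prime cardJ mulnK.
Qed.

End PrimeIdealSeries.

Theorem theorem3p8 (T : finType) (B : brace T) :
  (forall (p : nat) (P : {group brace_add B}),
      prime p -> P \in ('Syl_p([set: brace_add B]))%g -> cyclic P) ->
  (forall (p : nat) (P : {group brace_mul B}),
      prime p -> P \in ('Syl_p([set: brace_mul B]))%g -> cyclic P) ->
  supersoluble B.
Proof.
move=> cycA cycM.
have idT : is_ideal B [set: T] by split; first split; move=> *; rewrite in_setT.
have [n [I [I0 In idI sI prI]]] :=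
  ideal_prime_series (Zgroup_cyclic_Sylows cycA) (Zgroup_cyclic_Sylows cycM) idT.
by exists n, I; split=> // i lt_in; right; apply: prI.
Qed.
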